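(* There exist absolute constants $c_1,c_2>0$ such that for every $M\in\{0,1\}^{m\times n}$, $$c_1\operatorname{disc}^{+}(M)\leq \operatorname{pdisc}_0(M)\leq c_2\operatorname{disc}^{+}(M)\quad\text{and}\quad c_1\operatorname{disc}^{-}(M)\leq \operatorname{pdisc}_0(M)\leq c_2\operatorname{disc}^{-}(M).$$
   Context: For $M\in\{0,1\}^{m\times n}$, $|M|$ is the number of $1$ entries, $p=|M|/(mn)$, and for $X\subset[m]$, $Y\subset[n]$, $\operatorname{disc}(X,Y)=|M[X\times Y]|-p|X||Y|$, where $|M[X\times Y]|$ is the number of $1$ entries of the submatrix with rows $X$ and columns $Y$; $\operatorname{disc}^{+}(M)=\max_{X,Y}\operatorname{disc}(X,Y)$ and $\operatorname{disc}^{-}(M)=\max_{X,Y}(-\operatorname{disc}(X,Y))$. Further, $\operatorname{pdisc}_0(M)=\max\left(\sum_{i,j}M_{i,j}\langle v_i,w_j\rangle-p\sum_{i,j}\langle v_i,w_j\rangle\right)$, the maximum over all $v_1,\dots,v_m,w_1,\dots,w_n\in\mathbb{R}^{m+n}$ with $\|v_i\|_2\leq1$, $\|w_j\|_2\leq 1$. *)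

From HB Require Import structures.
From mathcomp Require Import all_boot all_order all_algebra.
From mathcomp Require Import all_classical reals.
From mathcomp Require Import Rstruct.
From Stdlib Require Import Rdefinitions.
Set Implicit Arguments. Unset Strict Implicit. Unset Printing Implicit Defensive.
Import Order.TTheory GRing.Theory Num.Theory.
Local Open Scope ring_scope.

Section Disc.
Variables (m n : nat).
Implicit Types (M : 'M[bool]_(m, n)).

Definition ones M : nat := #|[set ij : 'I_m * 'I_n | M ij.1 ij.2]|.

Definition density M : R := (ones M)%:R / (m * n)%:R.

Definition ones_sub M (X : {set 'I_m}) (Y : {set 'I_n}) : nat :=
  #|[set ij : 'I_m * 'I_n | (ij.1 \in X) && (ij.2 \in Y) && M ij.1 ij.2]|.

Definition disc M (X : {set 'I_m}) (Y : {set 'I_n}) : R :=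
  (ones_sub M X Y)%:R - density M * (#|X|)%:R * (#|Y|)%:R.

(* max over all X, Y (the pair X = Y = set0 gives 0, so the seed 0 is harmless) *)
Definition disc_plus M : R :=
  \big[Num.max/0]_(X : {set 'I_m}) \big[Num.max/0]_(Y : {set 'I_n}) disc M X Y.

Definition disc_minus M : R :=
  \big[Num.max/0]_(X : {set 'I_m}) \big[Num.max/0]_(Y : {set 'I_n}) (- disc M X Y).

Definition dotv (v w : 'rV[R]_(m + n)) : R := \sum_k v 0 k * w 0 k.

Definition pdisc0_values M : set R :=
  [set x | exists (v : 'I_m -> 'rV[R]_(m + n)) (w : 'I_n -> 'rV[R]_(m + n)),
      (forall i, dotv (v i) (v i) <= 1) /\ (forall j, dotv (w j) (w j) <= 1) /\
      x = \sum_i \sum_j (M i j)%:R * dotv (v i) (w j)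
          - density M * \sum_i \sum_j dotv (v i) (w j)]%classic.

(* the maximum (attained, by compactness) = supremum of the value set *)
Definition pdisc0 M : R := sup (pdisc0_values M).

End Disc.

(* Write a_ij = M_ij - p.  Then disc(X, Y) is the bilinear form of a at the
   indicator vectors of X and Y, and pdisc_0 is the supremum of its vector
   version.  Because the a_ij sum to 0, the discrepancies of the four pairs
   (X or ~X, Y or ~Y) sum to 0, so disc^+ and disc^- are within a factor 3 of
   each other; and by multilinearity the form on [-1,1]^m x [-1,1]^n is at
   most 2 disc^+ + 2 disc^-.  For the vector version, map a unit vector u to
   the Rademacher sum X_u = sum_t eps_t u_t, so that <v, w> = E[X_v X_w], and
   truncate X_u at +-7.  The truncated parts contribute at most 49 times the
   scalar bound, while E[X_u^4] <= 3 makes the remainders so small that they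
   contribute at most half of the supremum itself.  Hence
   pdisc_0 <= 98 (2 disc^+ + 2 disc^-). *)

From mathcomp Require Import all_boot all_order all_algebra.
From mathcomp Require Import all_classical reals.
From mathcomp Require Import Rstruct numfun.
From Stdlib Require Import Rdefinitions.
From mathcomp Require Import ring lra.
Set Implicit Arguments. Unset Strict Implicit. Unset Printing Implicit Defensive.
Import Order.TTheory GRing.Theory Num.Theory.
Local Open Scope ring_scope.

Section RealBilinear.
Variable R : realType.

Section Rademacher.
Variable T : finType.
Implicit Types (e : {ffun T -> bool}) (u v : T -> R).

Definition sign (b : bool) : R := if b then 1 else -1.

Definition flip_at (a : T) e : {ffun T -> bool} :=
  [ffun t => if t == a then ~~ e t else e t].

Lemma flip_atK a : involutive (flip_at a).
Proof. by move=> e; apply/ffunP=> t; rewrite !ffunE; case: eqP => // _; rewrite negbK. Qed.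

Lemma sum_mul_sign_eq0 (g : {ffun T -> bool} -> R) a :
  (forall e, g (flip_at a e) = g e) -> \sum_e g e * sign (e a) = 0.
Proof.
move=> g_flip; suff E : \sum_e g e * sign (e a) = - \sum_e g e * sign (e a) by lra.
rewrite [LHS](reindex_inj (can_inj (flip_atK a))) -sumrN.
by apply: eq_bigr => e _; rewrite g_flip ffunE eqxx /sign; case: (e a) => /=; ring.
Qed.

Definition ncube : R := #|{ffun T -> bool}|%:R.

Lemma ncube_gt0 : 0 < ncube.
Proof. by rewrite ltr0n card_ffun card_bool expn_gt0. Qed.

Lemma sum_cube_const (c : R) : \sum_(e : {ffun T -> bool}) c = ncube * c.
Proof. by rewrite sumr_const mulr_natl. Qed.

Definition rademacher_seq (s : seq T) u e : R := \sum_(t <- s) sign (e t) * u t.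

Lemma rademacher_seq_cons a s u e :
  rademacher_seq (a :: s) u e = sign (e a) * u a + rademacher_seq s u e.
Proof. by rewrite /rademacher_seq big_cons. Qed.

Lemma rademacher_seq_flip a s u e :
  a \notin s -> rademacher_seq s u (flip_at a e) = rademacher_seq s u e.
Proof.
move=> a_s; apply: eq_big_seq => t ts; rewrite ffunE.
by case: eqP => // ta; move: a_s; rewrite -ta ts.
Qed.

Lemma rademacher_seq_moments s u : uniq s ->
  \sum_e rademacher_seq s u e ^+ 2 = ncube * \sum_(t <- s) u t ^+ 2 /\
  \sum_e rademacher_seq s u e ^+ 4 <= 3 * ncube * (\sum_(t <- s) u t ^+ 2) ^+ 2.
Proof.
elim: s => [_|a s IH /= /andP[a_s s_uniq]].
  have X0 e : rademacher_seq [::] u e = 0 by rewrite /rademacher_seq big_nil.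
  under eq_bigr do rewrite X0; under [X in _ /\ X <= _]eq_bigr do rewrite X0.
  by rewrite !big_nil !sum_cube_const !expr0n /= !mulr0.
have [IH2 IH4] := IH s_uniq.
have sq b x y : (sign b * y + x) ^+ 2 = x ^+ 2 + y ^+ 2 + (2 * y * x) * sign b.
  by case: b; rewrite /sign; ring.
have p4 b x y : (sign b * y + x) ^+ 4 = x ^+ 4 + 6 * y ^+ 2 * x ^+ 2 + y ^+ 4
     + (4 * y * x ^+ 3 + 4 * y ^+ 3 * x) * sign b.
  by case: b; rewrite /sign; ring.
rewrite big_cons; set q := \sum_(t <- s) u t ^+ 2 in IH2 IH4 *.
split.
  under eq_bigr do rewrite rademacher_seq_cons sq.
  rewrite !big_split /= sum_mul_sign_eq0 => [|e]; last by rewrite rademacher_seq_flip.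
  by rewrite IH2 sum_cube_const; ring.
under eq_bigr do rewrite rademacher_seq_cons p4.
rewrite !big_split /= sum_mul_sign_eq0 => [|e]; last by rewrite rademacher_seq_flip.
rewrite -mulr_sumr IH2 sum_cube_const.
have q_ge0 : 0 <= q by apply: sumr_ge0 => t _; rewrite sqr_ge0.
have y_ge0 : 0 <= u a ^+ 2 by rewrite sqr_ge0.
set y := u a ^+ 2 in y_ge0 *.
have -> : u a ^+ 4 = y * y by rewrite /y; ring.
have : 0 <= ncube * (y * y) by apply: mulr_ge0; [exact/ltW/ncube_gt0 | exact: mulr_ge0].
nra.
Qed.

Definition rademacher u e : R := rademacher_seq (enum T) u e.

Lemma rademacher_sqr_sum u : \sum_e rademacher u e ^+ 2 = ncube * \sum_t u t ^+ 2.
Proof. by have [-> _] := rademacher_seq_moments u (enum_uniq T); rewrite big_enum. Qed.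

Lemma rademacher_fourth_sum u :
  \sum_e rademacher u e ^+ 4 <= 3 * ncube * (\sum_t u t ^+ 2) ^+ 2.
Proof. by have [_ H] := rademacher_seq_moments u (enum_uniq T); rewrite big_enum in H. Qed.

Lemma rademacherD u v e :
  rademacher (fun t => u t + v t) e = rademacher u e + rademacher v e.
Proof. by rewrite /rademacher /rademacher_seq -big_split /=; apply: eq_bigr => t _; ring. Qed.

Lemma rademacherB u v e :
  rademacher (fun t => u t - v t) e = rademacher u e - rademacher v e.
Proof. by rewrite /rademacher /rademacher_seq -sumrB; apply: eq_bigr => t _; ring. Qed.

Lemma rademacher_mul_sum u v :
  \sum_e rademacher u e * rademacher v e = ncube * \sum_t u t * v t.
Proof.
have polar (x y : R) : x * y = ((x + y) ^+ 2 - (x - y) ^+ 2) / 4 by field.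
under eq_bigr do rewrite polar -rademacherD -rademacherB.
under [in RHS]eq_bigr do rewrite polar.
by rewrite -!mulr_suml !sumrB !rademacher_sqr_sum; ring.
Qed.

End Rademacher.

Definition clamp (c z : R) : R := if z <= - c then - c else if c <= z then c else z.

Lemma norm_clamp_le c z : 0 <= c -> `|clamp c z| <= c.
Proof.
move=> c_ge0; rewrite ler_norml /clamp.
by case: (leP z (- c)) => h1; case: (leP c z) => h2 /=; apply/andP; split; lra.
Qed.

Lemma clamp_sqr_le c z : 0 <= c -> clamp c z ^+ 2 <= z ^+ 2.
Proof.
move=> c_ge0; rewrite /clamp.
case: (leP z (- c)) => h1; last case: (leP c z) => h2 //=; nra.
Qed.

Definition tail (c z : R) : R := z - clamp c z.

Lemma sqr_mul_tail_le c z : 0 <= c -> c ^+ 2 * tail c z ^+ 2 <= z ^+ 4.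
Proof.
move=> c_ge0; have -> : z ^+ 4 = z ^+ 2 * z ^+ 2 by ring.
rewrite /tail /clamp; case: (leP z (- c)) => h1; last case: (leP c z) => h2.
- apply: ler_pM; rewrite ?sqr_ge0 //; first nra.
  have -> : (z - - c) ^+ 2 = z ^+ 2 - (2 * (c * (- c - z)) + c ^+ 2) by ring.
  have : 0 <= c * (- c - z) by apply: mulr_ge0; lra.
  by have := sqr_ge0 c; lra.
- apply: ler_pM; rewrite ?sqr_ge0 //; first nra.
  have -> : (z - c) ^+ 2 = z ^+ 2 - (2 * (c * (z - c)) + c ^+ 2) by ring.
  have : 0 <= c * (z - c) by apply: mulr_ge0; lra.
  by have := sqr_ge0 c; lra.
- by rewrite subrr expr0n mulr0 mulr_ge0 ?sqr_ge0.
Qed.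

Definition indicator (T : finType) (X : {set T}) (t : T) : R := (t \in X)%:R.

Lemma indicator_ge0 (T : finType) (X : {set T}) t : 0 <= indicator X t.
Proof. exact: ler0n. Qed.

Lemma indicator_le1 (T : finType) (X : {set T}) t : indicator X t <= 1.
Proof. by rewrite /indicator lern1 leq_b1. Qed.

Lemma norm_indicator_le1 (T : finType) (X : {set T}) t : `|indicator X t| <= 1.
Proof. by rewrite ger0_norm ?indicator_ge0 ?indicator_le1. Qed.

Lemma card_indicator (T : finType) (X : {set T}) : #|X|%:R = \sum_t indicator X t.
Proof.
rewrite -sum1_card natr_sum big_mkcond; apply: eq_bigr => t _.
by rewrite /indicator; case: (t \in X).
Qed.

Lemma indicatorC (T : finType) (X : {set T}) t : indicator (~: X) t = 1 - indicator X t.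
Proof. by rewrite /indicator inE; case: (t \in X); rewrite /= ?subr0 ?subrr. Qed.

Lemma sum_mul_le_indicator_pos (I : finType) (x c : I -> R) :
  (forall i, 0 <= x i <= 1) ->
  \sum_i x i * c i <= \sum_i indicator [set i | 0 < c i] i * c i.
Proof.
move=> x01; apply: ler_sum => i _; rewrite /indicator inE.
have /andP[x_ge0 x_le1] := x01 i.
by case: (ltP 0 (c i)) => c_sgn /=; nra.
Qed.

Lemma funrpos_in01 (T : Type) (f : T -> R) t : `|f t| <= 1 -> 0 <= f^\+ t <= 1.
Proof. by rewrite ler_norml funrpos_ge0 ge_max ler01 andbT => /andP[]. Qed.

Lemma funrneg_in01 (T : Type) (f : T -> R) t : `|f t| <= 1 -> 0 <= f^\- t <= 1.
Proof. by rewrite ler_norml funrneg_ge0 ge_max ler01 andbT lerNl => /andP[]. Qed.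

Section Bilinear.
Variables I J : finType.
Implicit Types (b : I -> J -> R) (x : I -> R) (y : J -> R).

Definition bilin b x y : R := \sum_i \sum_j b i j * x i * y j.

Lemma eq_bilin b x x' y y' : x =1 x' -> y =1 y' -> bilin b x y = bilin b x' y'.
Proof. by move=> ex ey; apply: eq_bigr => i _; apply: eq_bigr => j _; rewrite ex ey. Qed.

Lemma bilin_rowE b x y : bilin b x y = \sum_i x i * \sum_j b i j * y j.
Proof. by apply: eq_bigr => i _; rewrite big_distrr; apply: eq_bigr => j _ /=; ring. Qed.

Lemma bilin_colE b x y : bilin b x y = \sum_j y j * \sum_i b i j * x i.
Proof.
rewrite /bilin exchange_big; apply: eq_bigr => j _; rewrite big_distrr.
by apply: eq_bigr => i _ /=; ring.
Qed.

Lemma bilinBl b x1 x2 y : bilin b (x1 - x2) y = bilin b x1 y - bilin b x2 y.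
Proof.
rewrite /bilin -sumrB; apply: eq_bigr => i _; rewrite -sumrB.
by apply: eq_bigr => j _; rewrite !fctE; ring.
Qed.

Lemma bilinBr b x y1 y2 : bilin b x (y1 - y2) = bilin b x y1 - bilin b x y2.
Proof.
rewrite /bilin -sumrB; apply: eq_bigr => i _; rewrite -sumrB.
by apply: eq_bigr => j _; rewrite !fctE; ring.
Qed.

Lemma bilinNr b x y : bilin b x (fun j => - y j) = - bilin b x y.
Proof.
rewrite /bilin -sumrN; apply: eq_bigr => i _; rewrite -sumrN.
by apply: eq_bigr => j _; ring.
Qed.

Lemma bilinNc b x y : bilin (fun i j => - b i j) x y = - bilin b x y.
Proof.
rewrite /bilin -sumrN; apply: eq_bigr => i _; rewrite -sumrN.
by apply: eq_bigr => j _; ring.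
Qed.

Lemma bilinZ b c x y : bilin b (fun i => c * x i) (fun j => c * y j) = c ^+ 2 * bilin b x y.
Proof.
rewrite /bilin big_distrr; apply: eq_bigr => i _; rewrite big_distrr.
by apply: eq_bigr => j _ /=; ring.
Qed.

Lemma bilin_le_vertex b x y : (forall i, 0 <= x i <= 1) -> (forall j, 0 <= y j <= 1) ->
  exists X Y, bilin b x y <= bilin b (indicator X) (indicator Y).
Proof.
move=> x01 y01.
set X := [set i | 0 < \sum_j b i j * y j].
have le_X : bilin b x y <= bilin b (indicator X) y.
  by rewrite !bilin_rowE; apply: sum_mul_le_indicator_pos.
set Y := [set j | 0 < \sum_i b i j * indicator X i].
have le_Y : bilin b (indicator X) y <= bilin b (indicator X) (indicator Y).
  by rewrite !(bilin_colE b (indicator X)); apply: sum_mul_le_indicator_pos.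
by exists X, Y; apply: le_trans le_X le_Y.
Qed.

Lemma bilin_indicator_compl b X Y : \sum_i \sum_j b i j = 0 ->
  bilin b (indicator X) (indicator Y) + bilin b (indicator (~: X)) (indicator Y)
  + bilin b (indicator X) (indicator (~: Y)) + bilin b (indicator (~: X)) (indicator (~: Y))
  = 0.
Proof.
move=> sum_b0; rewrite /bilin -!big_split /= -[RHS]sum_b0; apply: eq_bigr => i _.
by rewrite -!big_split; apply: eq_bigr => j _ /=; rewrite !indicatorC; ring.
Qed.

End Bilinear.

Lemma abs_dot_le1 (T : finType) (v w : T -> R) :
  \sum_t v t ^+ 2 <= 1 -> \sum_t w t ^+ 2 <= 1 -> `|\sum_t v t * w t| <= 1.
Proof.
move=> v_le1 w_le1; apply: le_trans (ler_norm_sum _ _ _) _.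
have amgm t : `|v t * w t| <= (v t ^+ 2 + w t ^+ 2) / 2.
  have := sqr_ge0 (v t - w t); have := sqr_ge0 (v t + w t).
  by case: (lerP 0 (v t * w t)) => h; [rewrite ger0_norm | rewrite ltr0_norm]; nra.
apply: le_trans (ler_sum _ (fun t _ => amgm t)) _.
by rewrite -mulr_suml big_split /=; lra.
Qed.

Section VectorBilinear.
Variables I J : finType.
Implicit Types (b : I -> J -> R).

Definition vbilin (T : finType) b (v : I -> T -> R) (w : J -> T -> R) : R :=
  \sum_i \sum_j b i j * \sum_t v i t * w j t.

Definition vbilin_values b : set R :=
  [set z | exists (T : finType) (v : I -> T -> R) (w : J -> T -> R),
    [/\ forall i, \sum_t v i t ^+ 2 <= 1, forall j, \sum_t w j t ^+ 2 <= 1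
      & z = vbilin b v w]].

(* The dimension is left free: the Rademacher embedding changes it. *)
Definition vbilin_sup b : R := sup (vbilin_values b).

Variable b : I -> J -> R.

Lemma vbilin_sum_bilin (T : finType) v w :
  vbilin b v w = \sum_(t : T) bilin b (fun i => v i t) (fun j => w j t).
Proof.
transitivity (\sum_i \sum_j \sum_(t : T) b i j * v i t * w j t).
  apply: eq_bigr => i _; apply: eq_bigr => j _.
  by rewrite big_distrr; apply: eq_bigr => t _ /=; ring.
by under eq_bigr do rewrite exchange_big; rewrite exchange_big.
Qed.

Lemma eq_vbilin (T T' : finType) v w v' w' :
  (forall i j, \sum_(t : T) v i t * w j t = \sum_(s : T') v' i s * w' j s) ->
  vbilin b v w = vbilin b v' w'.
Proof. by move=> dotE; apply: eq_bigr => i _; apply: eq_bigr => j _; rewrite dotE. Qed.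

Lemma vbilinDl (T : finType) (v v1 v2 : I -> T -> R) w :
  (forall i t, v i t = v1 i t + v2 i t) -> vbilin b v w = vbilin b v1 w + vbilin b v2 w.
Proof.
move=> vE; rewrite /vbilin -big_split; apply: eq_bigr => i _ /=.
rewrite -big_split; apply: eq_bigr => j _ /=.
by rewrite -mulrDr -big_split; congr (_ * _); apply: eq_bigr => t _; rewrite vE mulrDl.
Qed.

Lemma vbilinDr (T : finType) v (w w1 w2 : J -> T -> R) :
  (forall j t, w j t = w1 j t + w2 j t) -> vbilin b v w = vbilin b v w1 + vbilin b v w2.
Proof.
move=> wE; rewrite /vbilin -big_split; apply: eq_bigr => i _ /=.
rewrite -big_split; apply: eq_bigr => j _ /=.
by rewrite -mulrDr -big_split; congr (_ * _); apply: eq_bigr => t _; rewrite wE mulrDr.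
Qed.

Lemma vbilin_le_sum_norm z : vbilin_values b z -> z <= \sum_i \sum_j `|b i j|.
Proof.
move=> [T [v [w [v_le1 w_le1 ->]]]].
apply: ler_sum => i _; apply: ler_sum => j _.
apply: le_trans (ler_norm _) _; rewrite normrM ler_piMr //.
exact: abs_dot_le1.
Qed.

Lemma vbilin_values0 : vbilin_values b 0.
Proof.
exists bool, (fun _ _ => 0), (fun _ _ => 0); split.
- by move=> i; rewrite big1 // => t _; rewrite expr0n.
- by move=> j; rewrite big1 // => t _; rewrite expr0n.
- by rewrite /vbilin big1 // => i _; rewrite big1 // => j _; rewrite big1 ?mulr0 // => t _; rewrite mulr0.
Qed.

Lemma has_sup_vbilin_values : has_sup (vbilin_values b).
Proof.
split; first by exists 0; exact: vbilin_values0.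
by exists (\sum_i \sum_j `|b i j|) => z; apply: vbilin_le_sum_norm.
Qed.

Lemma vbilin_le_sup z : vbilin_values b z -> z <= vbilin_sup b.
Proof. exact: (sup_upper_bound has_sup_vbilin_values). Qed.

Lemma vbilinZl (T : finType) c (v : I -> T -> R) w :
  vbilin b (fun i t => c * v i t) w = c * vbilin b v w.
Proof.
rewrite /vbilin big_distrr; apply: eq_bigr => i _; rewrite big_distrr.
apply: eq_bigr => j _ /=.
have -> : \sum_t c * v i t * w j t = c * \sum_t v i t * w j t.
  by rewrite big_distrr; apply: eq_bigr => t _ /=; ring.
ring.
Qed.

Lemma vbilinZr (T : finType) c v (w : J -> T -> R) :
  vbilin b v (fun j t => c * w j t) = c * vbilin b v w.
Proof.
rewrite /vbilin big_distrr; apply: eq_bigr => i _; rewrite big_distrr.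
apply: eq_bigr => j _ /=.
have -> : \sum_t v i t * (c * w j t) = c * \sum_t v i t * w j t.
  by rewrite big_distrr; apply: eq_bigr => t _ /=; ring.
ring.
Qed.

Lemma sum_sqr_scale4_le1 (T : finType) (u : T -> R) :
  \sum_t u t ^+ 2 <= 1 / 16 -> \sum_t (4 * u t) ^+ 2 <= 1.
Proof. by move=> u_small; under eq_bigr do rewrite exprMn; rewrite -mulr_sumr; lra. Qed.

Lemma vbilin_le_quarter_sup_l (T : finType) (v : I -> T -> R) (w : J -> T -> R) :
  (forall i, \sum_t v i t ^+ 2 <= 1 / 16) -> (forall j, \sum_t w j t ^+ 2 <= 1) ->
  vbilin b v w <= vbilin_sup b / 4.
Proof.
move=> v_small w_le1.
have /vbilin_le_sup : vbilin_values b (vbilin b (fun i t => 4 * v i t) w).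
  by exists T, (fun i t => 4 * v i t), w; split => // i; apply: sum_sqr_scale4_le1.
by rewrite vbilinZl; lra.
Qed.

Lemma vbilin_le_quarter_sup_r (T : finType) (v : I -> T -> R) (w : J -> T -> R) :
  (forall i, \sum_t v i t ^+ 2 <= 1) -> (forall j, \sum_t w j t ^+ 2 <= 1 / 16) ->
  vbilin b v w <= vbilin_sup b / 4.
Proof.
move=> v_le1 w_small.
have /vbilin_le_sup : vbilin_values b (vbilin b v (fun j t => 4 * w j t)).
  by exists T, v, (fun j t => 4 * w j t); split => // j; apply: sum_sqr_scale4_le1.
by rewrite vbilinZr; lra.
Qed.

End VectorBilinear.

Section RademacherFeatures.
Variable T : finType.
Implicit Types (u v : T -> R) (f g : R -> R).

Definition feature f u (e : {ffun T -> bool}) : R :=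
  Num.sqrt (ncube T)^-1 * f (rademacher u e).

Lemma sqr_sqrt_ncubeV : Num.sqrt (ncube T)^-1 ^+ 2 = (ncube T)^-1.
Proof. by rewrite sqr_sqrtr // invr_ge0 ltW // ncube_gt0. Qed.

Lemma sum_feature_mul f g u v :
  \sum_e feature f u e * feature g v e
  = (ncube T)^-1 * \sum_e f (rademacher u e) * g (rademacher v e).
Proof.
rewrite big_distrr; apply: eq_bigr => e _ /=.
by rewrite -sqr_sqrt_ncubeV /feature; ring.
Qed.

Lemma sum_feature_sqr f u :
  \sum_e feature f u e ^+ 2 = (ncube T)^-1 * \sum_e f (rademacher u e) ^+ 2.
Proof.
under eq_bigr do rewrite expr2.
by rewrite sum_feature_mul; under [in RHS]eq_bigr do rewrite expr2.
Qed.

Lemma sum_feature_id_mul u v : \sum_e feature id u e * feature id v e = \sum_t u t * v t.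
Proof. by rewrite sum_feature_mul rademacher_mul_sum mulKf // gt_eqF // ncube_gt0. Qed.

Lemma sum_feature_id_sqr u : \sum_e feature id u e ^+ 2 = \sum_t u t ^+ 2.
Proof. by rewrite sum_feature_sqr rademacher_sqr_sum mulKf // gt_eqF // ncube_gt0. Qed.

Lemma sum_feature_clamp_sqr_le1 u :
  \sum_t u t ^+ 2 <= 1 -> \sum_e feature (clamp 7) u e ^+ 2 <= 1.
Proof.
move=> u_le1; apply: le_trans u_le1; rewrite -sum_feature_id_sqr !sum_feature_sqr.
rewrite ler_pM2l ?invr_gt0 ?ncube_gt0 //.
by apply: ler_sum => e _; apply: clamp_sqr_le.
Qed.

(* 7 is large enough that the fourth-moment bound gives a tail of squared norm 3/49 <= 1/16. *)
Lemma sum_feature_tail_sqr_small u :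
  \sum_t u t ^+ 2 <= 1 -> \sum_e feature (tail 7) u e ^+ 2 <= 1 / 16.
Proof.
move=> u_le1; rewrite sum_feature_sqr.
have N_gt0 := ncube_gt0 T.
have tail_le : 49 * \sum_e tail 7 (rademacher u e) ^+ 2 <= \sum_e rademacher u e ^+ 4.
  have sqr7 : 7 ^+ 2 = 49 :> R by rewrite -natrX.
  by rewrite mulr_sumr; apply: ler_sum => e _; rewrite -sqr7 sqr_mul_tail_le.
have fourth := rademacher_fourth_sum u.
have q_ge0 : 0 <= \sum_t u t ^+ 2 by apply: sumr_ge0 => t _; apply: sqr_ge0.
set q := \sum_t u t ^+ 2 in u_le1 fourth q_ge0.
set s := \sum_e tail 7 _ ^+ 2 in tail_le *.
have q2_le1 : q ^+ 2 <= 1 by nra.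
have le3N : 3 * ncube T * q ^+ 2 <= 3 * ncube T by nra.
rewrite -(ler_pM2l N_gt0) mulVKf ?gt_eqF //; lra.
Qed.

Lemma norm_feature_clamp_le u e :
  `|feature (clamp 7) u e| <= 7 * Num.sqrt (ncube T)^-1.
Proof.
rewrite /feature normrM ger0_norm ?sqrtr_ge0 // mulrC ler_wpM2r ?sqrtr_ge0 //.
exact: norm_clamp_le.
Qed.

End RademacherFeatures.

Section Grothendieck.
Variables (I J : finType) (b : I -> J -> R) (beta : R).
Hypothesis bilin_le_box : forall x y,
  (forall i, `|x i| <= 1) -> (forall j, `|y j| <= 1) -> bilin b x y <= beta.

Lemma bilin_le_scaled_box (c : R) x y : 0 < c ->
  (forall i, `|x i| <= c) -> (forall j, `|y j| <= c) -> bilin b x y <= c ^+ 2 * beta.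
Proof.
move=> c_gt0 x_le y_le.
rewrite (@eq_bilin _ _ b x (fun i => c * (x i / c)) y (fun j => c * (y j / c)));
  try by move=> ?; rewrite mulrCA divff ?mulr1 // gt_eqF.
rewrite bilinZ ler_wpM2l ?sqr_ge0 //.
by apply: bilin_le_box => [i|j]; rewrite normrM normfV (gtr0_norm c_gt0) ler_pdivrMr // mul1r.
Qed.

Lemma vbilin_le_half_sup (T : finType) (v : I -> T -> R) (w : J -> T -> R) :
  (forall i, \sum_t v i t ^+ 2 <= 1) -> (forall j, \sum_t w j t ^+ 2 <= 1) ->
  vbilin b v w <= 49 * beta + vbilin_sup b / 2.
Proof.
move=> v_le1 w_le1.
pose fv f i := feature f (v i); pose fw f j := feature f (w j).
have -> : vbilin b v w = vbilin b (fv id) (fw id).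
  by apply: eq_vbilin => i j; rewrite sum_feature_id_mul.
have id_split u e : feature id u e = feature (clamp 7) u e + feature (tail 7) u e.
  by rewrite /feature /tail -mulrDr addrC subrK.
rewrite (@vbilinDl _ _ b _ _ (fv (clamp 7)) (fv (tail 7))) => [|i e]; last exact: id_split.
rewrite (@vbilinDr _ _ b _ _ _ (fw (clamp 7)) (fw (tail 7))) => [|j e]; last exact: id_split.
have clamp_term : vbilin b (fv (clamp 7)) (fw (clamp 7)) <= 49 * beta.
  have k_gt0 : 0 < 7 * Num.sqrt (ncube T)^-1.
    by rewrite mulr_gt0 // sqrtr_gt0 invr_gt0 ncube_gt0.
  rewrite vbilin_sum_bilin.
  apply: le_trans (ler_sum _ (fun e _ => bilin_le_scaled_box k_gt0
    (fun i => norm_feature_clamp_le (v i) e) (fun j => norm_feature_clamp_le (w j) e))) _.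
  rewrite sum_cube_const exprMn sqr_sqrt_ncubeV [7 ^+ 2 / _]mulrC -mulrA.
  by rewrite mulVKf ?gt_eqF ?ncube_gt0 // -natrX.
have fw_id j : \sum_e fw id j e ^+ 2 <= 1 by rewrite sum_feature_id_sqr.
have := vbilin_le_quarter_sup_r b (fun i => sum_feature_clamp_sqr_le1 (v_le1 i))
  (fun j => sum_feature_tail_sqr_small (w_le1 j)).
have := vbilin_le_quarter_sup_l b (fun i => sum_feature_tail_sqr_small (v_le1 i)) fw_id.
lra.
Qed.

Lemma vbilin_sup_le : vbilin_sup b <= 98 * beta.
Proof.
have : vbilin_sup b <= 49 * beta + vbilin_sup b / 2.
  apply: ge_sup; first by exists 0; exact: vbilin_values0.
  by move=> z [T [v [w [v_le1 w_le1 ->]]]]; exact: vbilin_le_half_sup.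
lra.
Qed.

End Grothendieck.

End RealBilinear.

Arguments indicator {R T} X t.

Section Discrepancy.
Variables (m n : nat) (M : 'M[bool]_(m, n)).

Definition centered i j := (M i j)%:R - density M.

Lemma disc_bilin X Y : disc M X Y = bilin centered (indicator X) (indicator Y).
Proof.
have ones_subE : (ones_sub M X Y)%:R
    = \sum_i \sum_j (M i j)%:R * indicator X i * indicator Y j :> R.
  rewrite /ones_sub card_indicator pair_bigA; apply: eq_bigr => [[i j]] _.
  rewrite /indicator inE -!natrM !mulnb.
  by case: (M i j); case: (i \in X); case: (j \in Y).
have densityE : density M * #|X|%:R * #|Y|%:R
    = \sum_i \sum_j density M * indicator X i * indicator Y j.
  rewrite !card_indicator -mulrA mulr_suml mulr_sumr; apply: eq_bigr => i _.
  by rewrite !mulr_sumr; apply: eq_bigr => j _; rewrite mulrA.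
rewrite /disc !RealsE ones_subE densityE -sumrB; apply: eq_bigr => i _.
by rewrite -sumrB; apply: eq_bigr => j _; rewrite /centered; ring.
Qed.

Lemma sum_centered : \sum_i \sum_j centered i j = 0.
Proof.
have onesE : \sum_i \sum_j (M i j)%:R = (ones M)%:R :> R.
  rewrite /ones card_indicator (pair_bigA _ (fun i j => (M i j)%:R)).
  by apply: eq_bigr => ij _; rewrite /indicator inE.
rewrite /centered; under eq_bigr do rewrite sumrB sumr_const card_ord.
rewrite sumrB onesE sumr_const card_ord -mulrnA /density.
have [mn0|mn_neq0] := eqVneq (muln m n) O.
  have : leq (ones M) (muln m n) by rewrite (leq_trans (max_card _)) // card_prod !card_ord.
  by rewrite mn0 leqn0 => /eqP ->; rewrite !RealsE mul0r mul0rn subr0.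
rewrite !RealsE mulnC -mulr_natr; field.
by rewrite !pnatr_eq0 -!lt0n -muln_gt0 lt0n.
Qed.

Lemma disc_le_disc_plus X Y : disc M X Y <= disc_plus M.
Proof.
rewrite /disc_plus; apply: le_trans (le_bigmax _ _ X).
exact: (le_bigmax _ (fun Y => disc M X Y) Y).
Qed.

Lemma oppdisc_le_disc_minus X Y : - disc M X Y <= disc_minus M.
Proof.
rewrite /disc_minus; apply: le_trans (le_bigmax _ _ X).
exact: (le_bigmax _ (fun Y => - disc M X Y) Y).
Qed.

Lemma disc_set0 : disc M finset.set0 finset.set0 = 0.
Proof.
rewrite disc_bilin /bilin big1 // => i _; rewrite big1 // => j _.
by rewrite /indicator inE mulr0 mul0r.
Qed.

Lemma disc_plus_ge0 : 0 <= disc_plus M.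
Proof. by rewrite -disc_set0 disc_le_disc_plus. Qed.

Lemma disc_minus_ge0 : 0 <= disc_minus M.
Proof. by rewrite -oppr0 -disc_set0 oppdisc_le_disc_minus. Qed.

Lemma bilin_cube_le_disc_plus x y :
  (forall i, 0 <= x i <= 1) -> (forall j, 0 <= y j <= 1) -> bilin centered x y <= disc_plus M.
Proof.
move=> x01 y01; have [X [Y le_XY]] := bilin_le_vertex centered x01 y01.
by apply: le_trans le_XY _; rewrite -disc_bilin disc_le_disc_plus.
Qed.

Lemma bilin_cube_ge_disc_minus x y :
  (forall i, 0 <= x i <= 1) -> (forall j, 0 <= y j <= 1) -> - bilin centered x y <= disc_minus M.
Proof.
move=> x01 y01; have [X [Y]] := bilin_le_vertex (fun i j => - centered i j) x01 y01.
by rewrite !bilinNc => le_XY; apply: le_trans le_XY _; rewrite -disc_bilin oppdisc_le_disc_minus.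
Qed.

Lemma bilin_box_le_disc x y : (forall i, `|x i| <= 1) -> (forall j, `|y j| <= 1) ->
  bilin centered x y <= 2 * disc_plus M + 2 * disc_minus M.
Proof.
move=> x_le1 y_le1.
have xp i := funrpos_in01 (x_le1 i); have xn i := funrneg_in01 (x_le1 i).
have yp j := funrpos_in01 (y_le1 j); have yn j := funrneg_in01 (y_le1 j).
rewrite -[x]funrposBneg -[y]funrposBneg bilinBl !bilinBr.
have := bilin_cube_le_disc_plus xp yp; have := bilin_cube_le_disc_plus xn yn.
have := bilin_cube_ge_disc_minus xp yn; have := bilin_cube_ge_disc_minus xn yp.
lra.
Qed.

Lemma disc_minus_le3 : disc_minus M <= 3 * disc_plus M.
Proof.
have := disc_plus_ge0; rewrite /disc_minus => dp_ge0.
apply: bigmax_le => [|X _]; first lra.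
apply: bigmax_le => [|Y _]; first lra.
have := bilin_indicator_compl X Y sum_centered; rewrite -!disc_bilin.
have := disc_le_disc_plus (~: X) Y; have := disc_le_disc_plus X (~: Y).
have := disc_le_disc_plus (~: X) (~: Y).
lra.
Qed.

Lemma disc_plus_le3 : disc_plus M <= 3 * disc_minus M.
Proof.
have := disc_minus_ge0; rewrite /disc_plus => dm_ge0.
apply: bigmax_le => [|X _]; first lra.
apply: bigmax_le => [|Y _]; first lra.
have := bilin_indicator_compl X Y sum_centered; rewrite -!disc_bilin.
have := oppdisc_le_disc_minus (~: X) Y; have := oppdisc_le_disc_minus X (~: Y).
have := oppdisc_le_disc_minus (~: X) (~: Y).
lra.
Qed.

Lemma pdisc0_values_vbilin z : pdisc0_values M z -> vbilin_values centered z.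
Proof.
move=> [v [w [v_le1 [w_le1 ->]]]].
exists 'I_(m + n), (fun i t => v i 0 t), (fun j t => w j 0 t); split.
- by move=> i; under eq_bigr do rewrite expr2; exact: v_le1.
- by move=> j; under eq_bigr do rewrite expr2; exact: w_le1.
- rewrite /vbilin big_distrr -sumrB; apply: eq_bigr => i _.
  rewrite big_distrr -sumrB; apply: eq_bigr => j _.
  by rewrite /centered /dotv /=; ring.
Qed.

Lemma dotv0 : dotv (0 : 'rV[R]_(m + n)) 0 = 0.
Proof. by rewrite /dotv big1 // => k _; rewrite mxE mul0r. Qed.

Lemma pdisc0_values0 : pdisc0_values M 0.
Proof.
exists (fun _ => 0), (fun _ => 0); rewrite dotv0; split; [by [] | split; first by []].
by rewrite !big1 ?mulr0 ?subr0 // => i _; rewrite big1 // => j _; rewrite mulr0.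
Qed.

Lemma has_sup_pdisc0_values : has_sup (pdisc0_values M).
Proof.
split; first by exists 0; exact: pdisc0_values0.
by exists (vbilin_sup centered) => z /pdisc0_values_vbilin /vbilin_le_sup.
Qed.

Lemma pdisc0_le_vbilin_sup : pdisc0 M <= vbilin_sup centered.
Proof.
apply: ge_sup; first by exists 0; exact: pdisc0_values0.
by move=> z /pdisc0_values_vbilin /vbilin_le_sup.
Qed.

Lemma bilin_le_pdisc0 x y : (forall i, `|x i| <= 1) -> (forall j, `|y j| <= 1) ->
  bilin centered x y <= pdisc0 M.
Proof.
move=> x_le1 y_le1.
case: (posnP (m + n)) => [mn0|mn_gt0].
  rewrite /bilin big1 => [|i _]; first exact: (sup_upper_bound has_sup_pdisc0_values pdisc0_values0).
  by have := leq_trans (ltn_ord i) (leq_addr n m); rewrite mn0.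
pose e : 'rV[R]_(m + n) := \row_t ((t == Ordinal mn_gt0)%:R).
have dotv_e c d : dotv (c *: e) (d *: e) = c * d.
  rewrite /dotv (bigD1 (Ordinal mn_gt0)) //= big1 => [|t /negbTE t_neq].
    by rewrite !mxE eqxx /= mulr1n; ring.
  by rewrite !mxE t_neq /= mulr0n; ring.
have sqr_le1 (z : R) : `|z| <= 1 -> z ^+ 2 <= 1 by move=> z_le1; rewrite -(real_normK (num_real z)) exprn_ile1.
apply: (sup_upper_bound has_sup_pdisc0_values).
exists (fun i => x i *: e), (fun j => y j *: e); split; [|split].
- by move=> i; rewrite dotv_e -expr2 sqr_le1.
- by move=> j; rewrite dotv_e -expr2 sqr_le1.
- rewrite /bilin big_distrr -sumrB; apply: eq_bigr => i _.
  rewrite big_distrr -sumrB; apply: eq_bigr => j _.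
  by rewrite !dotv_e /centered /=; ring.
Qed.

Lemma disc_plus_le_pdisc0 : disc_plus M <= pdisc0 M.
Proof.
have pdisc_ge0 : 0 <= pdisc0 M by rewrite -disc_set0 disc_bilin bilin_le_pdisc0 // => ?; exact: norm_indicator_le1.
rewrite /disc_plus; apply: bigmax_le => [//|X _]; apply: bigmax_le => [//|Y _].
by rewrite disc_bilin bilin_le_pdisc0 // => ?; exact: norm_indicator_le1.
Qed.

Lemma disc_minus_le_pdisc0 : disc_minus M <= pdisc0 M.
Proof.
have := disc_plus_ge0; have := disc_plus_le_pdisc0; rewrite /disc_minus => dp_le dp_ge0.
apply: bigmax_le => [|X _]; first lra.
apply: bigmax_le => [|Y _]; first lra.
rewrite disc_bilin -bilinNr.
by apply: bilin_le_pdisc0 => k; rewrite ?normrN norm_indicator_le1.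
Qed.

End Discrepancy.

Theorem claim2p5 :
  exists c1 c2 : R, 0 < c1 /\ 0 < c2 /\
    forall (m n : nat) (M : 'M[bool]_(m, n)),
      [/\ c1 * disc_plus M <= pdisc0 M, pdisc0 M <= c2 * disc_plus M,
          c1 * disc_minus M <= pdisc0 M & pdisc0 M <= c2 * disc_minus M].
Proof.
exists 1, 784; split; first lra; split; first lra.
move=> m n M.
have pdisc0_le : pdisc0 M <= 98 * (2 * disc_plus M + 2 * disc_minus M).
  exact: le_trans (pdisc0_le_vbilin_sup M) (vbilin_sup_le (bilin_box_le_disc M)).
have := disc_plus_le_pdisc0 M; have := disc_minus_le_pdisc0 M.
have := disc_minus_le3 M; have := disc_plus_le3 M.
by split; lra.
Qed.
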